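(* Let $E$ be a real Hilbert space, $C\subseteq E$ nonempty closed convex, $\rho=\sup_{x,y\in C}\lVert x-y\rVert\in[0,+\infty]$, $a\in C$, and $\widehat{x}_t^*\in E$ arbitrary predictions. For all $z\in C$: (i) If $\eta_1\geqslant\dots\geqslant\eta_{T+1}>0$ and the learner plays $\widetilde{x}_t=P_C\big(a-\eta_t\sum_{i=1}^{t-1}x_i^*\big)$, $x_t=P_C\big(\widetilde{x}_t-\eta_t\widehat{x}_t^*\big)$, then \[\mathrm{Regret}(z,\dots,z)\leqslant\frac1{2\eta_{T+1}}\lVert z-a\rVert^2+\sum_{t=1}^T\frac1{\eta_t}Q_\rho^\star\big(\eta_t\lVert x_t^*-\widehat{x}_t^*\rVert\big)-\sum_{t=1}^T\frac1{2\eta_t}\lVert x_t-\widetilde{x}_t\rVert^2,\] and also $\mathrm{Regret}(z,\dots,z)\leqslant\frac1{2\eta_{T+1}}\lVert z-a\rVert^2+\sum_{t=1}^T\frac1{\eta_t}\Phi_{\eta_t}(x_t^*,\widehat{x}_t^* )-\sum_{t=1}^T\frac1{2\eta_t}\lVert y_t-\widetilde{x}_t\rVert^2$ with $y_t=P_C(\widetilde{x}_t-\eta_t\widehat{y}_t^* )$. (ii) If $0<\theta_1\leqslant\dots\leqslant\theta_T$ and the learner plays $\widetilde{x}_t=P_C\big(a-\sum_{i=1}^{t-1}\theta_ix_i^*\big)$, $x_t=P_C\big(\widetilde{x}_t-\theta_t\widehat{x}_t^*\big)$, then \[\mathrm{Regret}(z,\dots,z)\leqslant\frac1{2\theta_1}\lVert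 z-a\rVert^2+\sum_{t=1}^T\frac1{\theta_t}Q_\rho^\star\big(\theta_t\lVert x_t^*-\widehat{x}_t^*\rVert\big)-\sum_{t=1}^T\frac1{2\theta_t}\lVert x_t-\widetilde{x}_t\rVert^2,\] and also $\mathrm{Regret}(z,\dots,z)\leqslant\frac1{2\theta_1}\lVert z-a\rVert^2+\sum_{t=1}^T\frac1{\theta_t}\Phi_{\theta_t}(x_t^*,\widehat{x}_t^* )-\sum_{t=1}^T\frac1{2\theta_t}\lVert y_t-\widetilde{x}_t\rVert^2$ with $y_t=P_C(\widetilde{x}_t-\theta_t\widehat{y}_t^* )$.
   Context: $P_C$ is the metric projection onto $C$. Protocol: at rounds $t=1,\dots,T$ the learner plays $x_t\in C$, the adversary reveals a proper $\varphi_t\colon E\to(-\infty,+\infty]$ with $C\subseteq\operatorname{dom}\partial\varphi_t$, and $x_t^*\in\partial\varphi_t(x_t)$ ($E$ identified with its dual). $\mathrm{Regret}(z,\dots,z)=\sum_t\varphi_t(x_t)-\sum_t\varphi_t(z)$. $Q_\rho^\star(\varkappa)=\frac12\varkappa^2-\frac12(\lvert\varkappa\rvert-\rho)_+^2$ (with $Q_\infty^\star(\varkappa)=\frac12\varkappa^2$), $x_+=\max\{x,0\}$. $\widehat{y}_t^*=\lambda\widehat{x}_t^*+(1-\lambda)x_t^*$, $\lambda=\min\{\lVert x_t^*\rVert/\lVert x_t^*-\widehat{x}_t^*\rVert,1\}$ (any $\lambda$ if $x_t^*=\widehat{x}_t^*$). For $\xi>0$: $\Phi_\xi(x^*,\widehat{x}^*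 )=Q_\rho^\star\big(\xi\min\{\lVert x^*-\widehat{x}^*\rVert,\lVert x^*\rVert\}\big)+\xi\lVert x^*\rVert\min\{\xi(\lVert x^*-\widehat{x}^*\rVert-\lVert x^*\rVert)_+,\rho\}$. *)

From HB Require Import structures.
From mathcomp Require Import all_boot all_order all_algebra.
From mathcomp Require Import all_classical all_reals all_analysis.
Set Implicit Arguments. Unset Strict Implicit. Unset Printing Implicit Defensive.
Import Order.TTheory GRing.Theory Num.Theory.
Import numFieldNormedType.Exports.
Local Open Scope classical_set_scope.
Local Open Scope ring_scope.

Section Defs.
Variables (R : realType) (E : completeNormedModType R).

(* A real Hilbert space: a complete normed space whose norm comes from an
   inner product [ip] (symmetric, linear in the first argument, and
   ip x x = |x|^2). *)
Definition is_inner_product (ip : E -> E -> R) : Prop :=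
  (forall x y, ip x y = ip y x) /\
  (forall a x y z, ip (a *: x + y) z = a * ip x z + ip y z) /\
  (forall x, ip x x = `|x| ^+ 2).

Definition is_metric_projection (C : set E) (P : E -> E) : Prop :=
  forall x, C (P x) /\ forall y, C y -> `|x - P x| <= `|x - y|.

Definition diameter (C : set E) : \bar R :=
  ereal_sup [set (`|x - y|)%:E | x in C & y in C].

Definition subgrad (ip : E -> E -> R) (phi : E -> \bar R) (x xs : E) : Prop :=
  phi x \is a fin_num /\
  forall y, (phi x + (ip xs (y - x))%:E <= phi y)%E.

Definition proper_fun (phi : E -> \bar R) : Prop :=
  (forall x, phi x != -oo%E) /\ exists x, phi x != +oo%E.

Definition dom_subdiff (ip : E -> E -> R) (phi : E -> \bar R) : set E :=
  [set x | exists xs, subgrad ip phi x xs].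

Definition regret (T : nat) (phi : nat -> E -> \bar R) (x : nat -> E) (z : E)
  : \bar R :=
  (\sum_(1 <= t < T.+1) phi t (x t) - \sum_(1 <= t < T.+1) phi t z)%E.

Definition lam (xs xh : E) : R := Num.min (`|xs| / `|xs - xh|) 1.
Definition yhat (xs xh : E) : E := lam xs xh *: xh + (1 - lam xs xh) *: xs.

End Defs.

Definition pos_part (R : realType) (x : R) : R := Num.max x 0.

Definition Qstar (R : realType) (rho : \bar R) (k : R) : R :=
  match rho with
  | (r%:E)%E => k ^+ 2 / 2 - (pos_part (`|k| - r)) ^+ 2 / 2
  | _ => k ^+ 2 / 2
  end.

Definition min_rho (R : realType) (rho : \bar R) (v : R) : R :=
  match rho with
  | (r%:E)%E => Num.min v r
  | _ => v
  end.

Definition Phi (R : realType) (E : completeNormedModType R) (rho : \bar R)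
  (xi : R) (xs xh : E) : R :=
  Qstar rho (xi * Num.min `|xs - xh| `|xs|)
  + xi * `|xs| * min_rho rho (xi * pos_part (`|xs - xh| - `|xs|)).

From HB Require Import structures.
From mathcomp Require Import all_boot all_order all_algebra.
From mathcomp Require Import all_classical all_reals all_analysis.
From mathcomp Require Import ring lra.
Import Order.TTheory GRing.Theory Num.Theory.
Import numFieldNormedType.Exports.
Local Open Scope classical_set_scope.
Local Open Scope ring_scope.

(* The iterate [x~_t] is the lazy projection [p_t = P (a - eta_t S_t)], the minimiser over C
   of [`|y - a|^2 / (2 eta_t) + <S_t, y>], and the three-point inequality of the projection
   says that this minimum grows quadratically away from [p_t]. Comparing the minima at [t]
   and [t + 1] telescopes the linearised regret [sum_t <x*_t, x_t - z>], which bounds the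
   regret by the subgradient inequality, down to [`|z - a|^2 / (2 eta_(T+1))] plus one term
   [<x*_t, x_t - y> - `|y - x~_t|^2 / (2 eta_t)] per round; with weights [theta_t] an Abel
   summation replaces the telescoping. The three-point inequality at
   [x_t = P (x~_t - eta_t x^*_t)] and Cauchy-Schwarz leave the error [eta k s - s^2 / 2]
   with [k = `|x*_t - x^*_t|] and [s = `|x_t - y| <= rho], which is at most [Qstar rho (eta k)].
   For [Phi] the same estimate is applied to the prediction [y^*_t], and the remaining
   [<x*_t, x_t - y_t>] is at most [`|x*_t| min (eta `|y^*_t - x^*_t|, rho)] because [P] is
   nonexpansive. *)

Section Sequences.
Context {R : realDomainType}.

Lemma nondecreasing_nat_le (f : nat -> R) m n :
  (forall t, (m <= t < n)%N -> f t <= f t.+1) ->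
  forall i j, (m <= i <= j)%N -> (j <= n)%N -> f i <= f j.
Proof.
move=> f_incr i j /andP[mi]; elim: j => [|j IH]; first by rewrite leqn0 => /eqP->.
rewrite leq_eqVlt ltnS => /orP[/eqP<-//|ij] jn.
by apply: le_trans (IH ij (ltnW jn)) (f_incr _ _); rewrite jn (leq_trans mi).
Qed.

Lemma nonincreasing_nat_gt0 (f : nat -> R) n :
  (forall t, (1 <= t <= n)%N -> f t.+1 <= f t) -> 0 < f n.+1 ->
  forall t, (1 <= t <= n.+1)%N -> 0 < f t.
Proof.
move=> f_decr fn_gt0 t t_in; apply: lt_le_trans fn_gt0 _; rewrite -lerN2.
apply: (nondecreasing_nat_le (fun t => - f t) 1 n.+1) => //.
by move=> k /andP[k_ge1 k_le]; rewrite lerN2 f_decr ?k_ge1.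
Qed.

Lemma nondecreasing_nat_gt0 (f : nat -> R) n :
  0 < f 1%N -> (forall t, (1 <= t < n)%N -> f t <= f t.+1) ->
  forall t, (1 <= t <= n)%N -> 0 < f t.
Proof.
move=> f1_gt0 f_incr t /andP[t_ge1 t_le]; apply: lt_le_trans f1_gt0 _.
exact: (nondecreasing_nat_le f 1 n).
Qed.

Lemma sum_weighted_decrements_le (N v : nat -> R) n :
  (forall t, (1 <= t <= n)%N -> 0 <= N t.+1 /\ v t.+1 <= v t) ->
  \sum_(1 <= t < n.+1) (N t - N t.+1) * v t <= N 1%N * v 1%N - N n.+1 * v n.+1.
Proof.
move=> Nv; rewrite -opprB -(telescope_sumr (fun t => N t * v t)) // -sumrN.
by apply: ler_sum_nat => t /Nv[N_ge0 v_le]; rewrite opprB; nra.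
Qed.

End Sequences.

Section QstarPhi.
Context {R : realType}.

(* [Qstar rho K] is the supremum of [K * s - s ^+ 2 / 2] over [0 <= s <= rho]. *)
Lemma le_Qstar (rho : \bar R) K s : 0 <= K -> 0 <= s -> (s%:E <= rho)%E ->
  K * s - s ^+ 2 / 2 <= Qstar rho K.
Proof.
move=> K_ge0 s_ge0; have := sqr_ge0 (K - s).
case: rho => [r||] /= sqrKs_ge0; [|by lra|by rewrite leeNy_eq].
rewrite lee_fin ger0_norm // /pos_part => s_le_r.
by have [] := leP (K - r) 0; nra.
Qed.

Lemma le_min_rho (rho : \bar R) s v : s <= v -> (s%:E <= rho)%E -> s <= min_rho rho v.
Proof. by case: rho => [r||] //= s_le_v; rewrite lee_fin le_min s_le_v. Qed.

Context {E : completeNormedModType R}.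

Lemma diameter_ge (C : set E) u v : C u -> C v -> (`|u - v|%:E <= diameter C)%E.
Proof. by move=> Cu Cv; apply: ereal_sup_ubound; exists u => //; exists v. Qed.

(* For [xs = xh], [lam xs xh = 0] since [`|xs| / 0 = 0]: the paper allows any lambda there. *)
Lemma lam_mul_norm (xs xh : E) : lam xs xh * `|xs - xh| = Num.min `|xs - xh| `|xs|.
Proof.
rewrite /lam; have [->|d_neq0] := eqVneq `|xs - xh| 0; first by rewrite mulr0 min_l.
by rewrite minr_pMl // divfK // mul1r minC.
Qed.

Lemma lam_ge0 (xs xh : E) : 0 <= lam xs xh.
Proof. by rewrite /lam le_min ler01 andbT divr_ge0. Qed.

Lemma norm_subr_yhat (xs xh : E) : `|xs - yhat xs xh| = Num.min `|xs - xh| `|xs|.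
Proof.
rewrite -lam_mul_norm -[lam xs xh]ger0_norm ?lam_ge0 // -normrZ /yhat.
by rewrite scalerBr scalerBl scale1r opprD opprB addrCA [xs + _]addrC subrK addrC.
Qed.

Lemma norm_yhat_subr (xs xh : E) :
  `|yhat xs xh - xh| = pos_part (`|xs - xh| - `|xs|).
Proof.
have lam_le1 : lam xs xh <= 1 by rewrite /lam ge_min lexx orbT.
have -> : yhat xs xh - xh = (1 - lam xs xh) *: (xs - xh).
  rewrite /yhat [RHS]scalerBr addrAC addrC; congr (_ + _).
  by rewrite scalerBl scale1r opprB.
rewrite normrZ ger0_norm ?subr_ge0 // mulrBl mul1r lam_mul_norm /pos_part.
have [le_d|lt_d] := leP `|xs - xh| `|xs|.
  by rewrite subrr max_r // subr_le0.
by rewrite max_l // subr_ge0 ltW.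
Qed.

End QstarPhi.

Section InnerProduct.
Context {R : realType} {E : completeNormedModType R} {ip : E -> E -> R}.
Hypothesis ip_inner : is_inner_product ip.

Lemma ipC x y : ip x y = ip y x.
Proof. by case: ip_inner. Qed.

Lemma ipxx x : ip x x = `|x| ^+ 2.
Proof. by case: ip_inner => _ []. Qed.

Lemma ipZDl a x y z : ip (a *: x + y) z = a * ip x z + ip y z.
Proof. by case: ip_inner => _ []. Qed.

Lemma ipDl x y z : ip (x + y) z = ip x z + ip y z.
Proof. by have := ipZDl 1 x y z; rewrite scale1r mul1r. Qed.

Lemma ip0l z : ip 0 z = 0.
Proof. by have := ipDl 0 0 z; rewrite addr0 => h; lra. Qed.

Lemma ipZl a x z : ip (a *: x) z = a * ip x z.
Proof. by have := ipZDl a x 0 z; rewrite !addr0 ip0l addr0. Qed.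

Lemma ipNl x z : ip (- x) z = - ip x z.
Proof. by rewrite -scaleN1r ipZl mulN1r. Qed.

Lemma ipBl x y z : ip (x - y) z = ip x z - ip y z.
Proof. by rewrite ipDl ipNl. Qed.

Lemma ipDr x y z : ip z (x + y) = ip z x + ip z y.
Proof. by rewrite ipC ipDl !(ipC z). Qed.

Lemma ipZr a x z : ip z (a *: x) = a * ip z x.
Proof. by rewrite ipC ipZl ipC. Qed.

Lemma ipNr x z : ip z (- x) = - ip z x.
Proof. by rewrite ipC ipNl ipC. Qed.

Lemma ipBr x y z : ip z (x - y) = ip z x - ip z y.
Proof. by rewrite ipC ipBl !(ipC z). Qed.

Lemma ip0r z : ip z 0 = 0.
Proof. by rewrite ipC ip0l. Qed.

Lemma sqr_normD x y : `|x + y| ^+ 2 = `|x| ^+ 2 + 2 * ip x y + `|y| ^+ 2.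
Proof. by rewrite -!ipxx ipDl !ipDr (ipC y x); lra. Qed.

Lemma sqr_normB x y : `|x - y| ^+ 2 = `|x| ^+ 2 - 2 * ip x y + `|y| ^+ 2.
Proof. by rewrite -!ipxx ipBl !ipBr (ipC y x); lra. Qed.

Lemma ip_le_norm x y : ip x y <= `|x| * `|y|.
Proof.
have [->|x_neq0] := eqVneq x 0; first by rewrite ip0l normr0 mul0r.
have [->|y_neq0] := eqVneq y 0; first by rewrite ip0r normr0 mulr0.
have nx_gt0 : 0 < `|x| by rewrite normr_gt0.
have ny_gt0 : 0 < `|y| by rewrite normr_gt0.
have := sqr_ge0 `|(`|y| *: x - `|x| *: y)|.
rewrite sqr_normB ipZl ipZr !normrZ !normr_id => h.
have nxy_gt0 : 0 < `|x| * `|y| by rewrite mulr_gt0.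
nra.
Qed.

Lemma regret_le_sum_ip (C : set E) T (phi : nat -> E -> \bar R) (x xs : nat -> E) z :
  C z ->
  (forall t, (1 <= t <= T)%N ->
     C `<=` dom_subdiff ip (phi t) /\ subgrad ip (phi t) (x t) (xs t)) ->
  (regret T phi x z <= (\sum_(1 <= t < T.+1) ip (xs t) (x t - z))%:E)%E.
Proof.
move=> Cz sub.
have fin_z t : (1 <= t <= T)%N -> phi t z \is a fin_num.
  by case/sub => /(_ z Cz)[? []].
rewrite /regret (eq_big_nat _ _ (F2 := fun t => (fine (phi t (x t)))%:E)); last first.
  by move=> t /sub[_ [fin_x _]]; rewrite fineK.
rewrite (eq_big_nat _ _ (F1 := fun t => phi t z) (F2 := fun t => (fine (phi t z))%:E)); last first.
  by move=> t t_in; rewrite fineK ?fin_z.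
rewrite !sumEFin -EFinB lee_fin -sumrB; apply: ler_sum_nat => t t_in.
have [_ [fin_x sub_x]] := sub t t_in.
have := sub_x z; rewrite -(fineK fin_x) -(fineK (fin_z t t_in)) -EFinD lee_fin !ipBr.
lra.
Qed.

Section Projection.
Context {C : set E} {P : E -> E}.
Hypotheses (C_convex : convex_set C) (P_proj : is_metric_projection C P).

Lemma proj_in w : C (P w).
Proof. by case: (P_proj w). Qed.

Lemma proj_id w : C w -> P w = w.
Proof.
move=> Cw; have [_ /(_ w Cw)] := P_proj w.
by rewrite subrr normr0 normr_le0 subr_eq0 => /eqP.
Qed.

Lemma proj_variational w y : C y -> ip (w - P w) (y - P w) <= 0.
Proof.
move=> Cy; set p := P w; set c := ip (w - p) (y - p); set N := `|y - p| ^+ 2.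
(* p is also the nearest point to w on the segment [p, y], which lies in C. *)
have segment s : 0 <= s <= 1 -> 2 * s * c <= s ^+ 2 * N.
  case/andP=> s_ge0 s_le1.
  have Cq : C (s *: y + (1 - s) *: p).
    have := @C_convex y p (Itv01 s_ge0 s_le1) (mem_set Cy) (mem_set (proj_in w)) : _ \in C.
    by move/set_mem.
  have [_ /(_ _ Cq) le_dist] := P_proj w; rewrite -/p in le_dist.
  have eq_diff : w - (s *: y + (1 - s) *: p) = (w - p) - s *: (y - p).
    rewrite scalerBl scale1r scalerBr !opprD !opprK !addrA.
    by congr (_ + _); exact: addrAC.
  rewrite eq_diff -ler_sqr ?nnegrE // (sqr_normB (w - p)) ipZr normrZ in le_dist.
  by move: le_dist; rewrite ger0_norm // exprMn -/c -/N; nra.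
rewrite leNgt; apply/negP => c_gt0.
have [N0|N_neq0] := eqVneq N 0.
  by have := segment 1; rewrite ler01 lexx N0; nra.
have N_gt0 : 0 < N by rewrite lt_neqAle eq_sym N_neq0 sqr_ge0.
set s := Num.min 1 (c / N).
have s_gt0 : 0 < s by rewrite lt_min ltr01 divr_gt0.
have sN_le_c : s * N <= c by rewrite -ler_pdivlMr // ge_min lexx orbT.
by have := segment s; rewrite ltW //= ge_min lexx; nra.
Qed.

Lemma proj_nonexpansive u v : `|P u - P v| <= `|u - v|.
Proof.
have vi_u := proj_variational u _ (proj_in v).
have vi_v := proj_variational v _ (proj_in u).
have cs := ip_le_norm (u - v) (P u - P v).
have firm : ip (u - v) (P u - P v) - `|P u - P v| ^+ 2
    = - ip (u - P u) (P v - P u) - ip (v - P v) (P u - P v).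
  rewrite -ipxx -ipBl -[P v - P u]opprB ipNr opprK -ipBl; congr ip.
  by rewrite !opprB addrACA [RHS]addrACA [- P u + _]addrC.
have := normr_ge0 (u - v); have := normr_ge0 (P u - P v); nra.
Qed.

Lemma proj_three_point eta u g y : 0 < eta -> C y ->
  ip g (P (u - eta *: g) - y) <= (2 * eta)^-1 *
    (`|y - u| ^+ 2 - `|y - P (u - eta *: g)| ^+ 2 - `|P (u - eta *: g) - u| ^+ 2).
Proof.
move=> eta_gt0 Cy; set p := P _.
have := proj_variational (u - eta *: g) _ Cy; rewrite -/p.
rewrite ler_pdivlMl ?mulr_gt0 // -[y - u](subrKA p) sqr_normD.
rewrite addrAC ipBl ipZl -[p - y]opprB ipNr (ipC (y - p)) -[p - u]opprB ipNl.
lra.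
Qed.

Lemma proj_step_le_Qstar eta xt g xs y : 0 < eta -> C y ->
  ip xs (P (xt - eta *: g) - y) - (2 * eta)^-1 * `|y - xt| ^+ 2
  <= eta^-1 * Qstar (diameter C) (eta * `|xs - g|)
     - (2 * eta)^-1 * `|P (xt - eta *: g) - xt| ^+ 2.
Proof.
move=> eta_gt0 Cy; set x := P _.
have three_pt := @proj_three_point eta xt g y eta_gt0 Cy.
have cs := ip_le_norm (xs - g) (x - y).
have conj_bound : `|xs - g| * `|x - y| - (2 * eta)^-1 * `|x - y| ^+ 2
    <= eta^-1 * Qstar (diameter C) (eta * `|xs - g|).
  rewrite -(ler_pM2l eta_gt0) mulVKf ?gt_eqF //.
  have -> : eta * (`|xs - g| * `|x - y| - (2 * eta)^-1 * `|x - y| ^+ 2)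
      = eta * `|xs - g| * `|x - y| - `|x - y| ^+ 2 / 2 by field; rewrite gt_eqF.
  exact: le_Qstar _ _ _ (mulr_ge0 (ltW eta_gt0) (normr_ge0 (xs - g)))
    (normr_ge0 (x - y)) (diameter_ge _ _ _ (proj_in _) Cy).
by rewrite -/x (distrC y x) in three_pt; rewrite ipBl in cs; lra.
Qed.

Lemma proj_step_le_Phi eta xt xh xs y : 0 < eta -> C y ->
  ip xs (P (xt - eta *: xh) - y) - (2 * eta)^-1 * `|y - xt| ^+ 2
  <= eta^-1 * Phi (diameter C) eta xs xh
     - (2 * eta)^-1 * `|P (xt - eta *: yhat xs xh) - xt| ^+ 2.
Proof.
move=> eta_gt0 Cy.
set x := P (xt - eta *: xh); set x' := P (xt - eta *: yhat xs xh).
have step := @proj_step_le_Qstar eta xt (yhat xs xh) xs y eta_gt0 Cy.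
rewrite norm_subr_yhat -/x' in step.
have dist : `|x - x'| <= min_rho (diameter C) (eta * pos_part (`|xs - xh| - `|xs|)).
  apply: le_min_rho; last exact: diameter_ge _ _ _ (proj_in _) (proj_in _).
  apply: le_trans (proj_nonexpansive _ _) _.
  by rewrite opprB addrC addrA subrK -scalerBr normrZ ger0_norm ?(ltW eta_gt0) ?norm_yhat_subr.
have cs := ler_wpM2l (normr_ge0 xs) dist.
have Phi_split : eta^-1 * Phi (diameter C) eta xs xh
    = eta^-1 * Qstar (diameter C) (eta * Num.min `|xs - xh| `|xs|)
      + `|xs| * min_rho (diameter C) (eta * pos_part (`|xs - xh| - `|xs|)).
  by rewrite /Phi mulrDr !mulrA mulVf ?mul1r ?gt_eqF.
rewrite Phi_split -[x - y](subrKA x') ipDr.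
by have := ip_le_norm xs (x - x'); lra.
Qed.

Lemma dual_averaging_le T (eta : nat -> R) (xs x : nat -> E) (a z : E) (B : nat -> R) :
  C a -> C z ->
  (forall t, (1 <= t <= T.+1)%N -> 0 < eta t) ->
  (forall t, (1 <= t <= T)%N -> eta t.+1 <= eta t) ->
  (forall t y, (1 <= t <= T)%N -> C y ->
     ip (xs t) (x t - y)
     - (2 * eta t)^-1 * `|y - P (a - eta t *: \sum_(1 <= i < t) xs i)| ^+ 2 <= B t) ->
  \sum_(1 <= t < T.+1) ip (xs t) (x t - z)
    <= (2 * eta T.+1)^-1 * `|z - a| ^+ 2 + \sum_(1 <= t < T.+1) B t.
Proof.
move=> Ca Cz eta_gt0 eta_decr step.
pose S t := \sum_(1 <= i < t) xs i.
pose p t := P (a - eta t *: S t).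
pose u t := (2 * eta t)^-1 * `|p t - a| ^+ 2 + ip (S t) (p t - z).
have opt t y : (1 <= t <= T.+1)%N -> C y ->
    (2 * eta t)^-1 * `|p t - a| ^+ 2 + ip (S t) (p t - y) + (2 * eta t)^-1 * `|y - p t| ^+ 2
    <= (2 * eta t)^-1 * `|y - a| ^+ 2.
  by move=> t_in Cy; have := @proj_three_point (eta t) a (S t) y (eta_gt0 t t_in) Cy; lra.
have incr t : (1 <= t < T.+1)%N -> ip (xs t) (x t - z) <= u t.+1 - u t + B t.
  move=> t_in; have t_in' : (1 <= t <= T.+1)%N by case/andP: t_in => -> /ltnW.
  have := step t (p t.+1) t_in (proj_in _).
  have := opt t (p t.+1) t_in' (proj_in _).
  have : (2 * eta t)^-1 * `|p t.+1 - a| ^+ 2 <= (2 * eta t.+1)^-1 * `|p t.+1 - a| ^+ 2.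
    rewrite ler_wpM2r ?sqr_ge0 // lef_pV2 ?posrE ?mulr_gt0 ?eta_gt0 ?ler_pM2l ?eta_decr //.
    by case/andP: t_in.
  have S_succ : S t.+1 = S t + xs t by rewrite /S big_nat_recr //=; case/andP: t_in.
  rewrite /u S_succ -/(p t) ipDl !ipBr; lra.
have u1 : u 1%N = 0.
  by rewrite /u /p /S big_geq // scaler0 subr0 proj_id // subrr normr0 ip0l; lra.
have uT : u T.+1 <= (2 * eta T.+1)^-1 * `|z - a| ^+ 2.
  have := opt T.+1 z (leqnn _) Cz.
  have : 0 <= (2 * eta T.+1)^-1 * `|z - p T.+1| ^+ 2.
    by rewrite mulr_ge0 ?sqr_ge0 // invr_ge0 mulr_ge0 // (ltW (eta_gt0 T.+1 (leqnn _))).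
  rewrite /u; lra.
apply: le_trans (ler_sum_nat incr) _.
by rewrite big_split telescope_sumr // u1 subr0 lerD2r.
Qed.

Lemma weighted_dual_averaging_le T (theta : nat -> R) (xs x : nat -> E) (a z : E)
    (B : nat -> R) :
  C a -> C z ->
  0 < theta 1%N -> (forall t, (1 <= t <= T)%N -> 0 < theta t) ->
  (forall t, (1 <= t < T)%N -> theta t <= theta t.+1) ->
  (forall t y, (1 <= t <= T)%N -> C y ->
     ip (xs t) (x t - y)
     - (2 * theta t)^-1 * `|y - P (a - \sum_(1 <= i < t) theta i *: xs i)| ^+ 2 <= B t) ->
  \sum_(1 <= t < T.+1) ip (xs t) (x t - z)
    <= (2 * theta 1%N)^-1 * `|z - a| ^+ 2 + \sum_(1 <= t < T.+1) B t.
Proof.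
move=> Ca Cz theta1_gt0 theta_gt0 theta_incr step.
pose S t := \sum_(1 <= i < t) theta i *: xs i.
pose p t := P (a - S t).
pose N t := (`|z - a| ^+ 2 - `|p t - a| ^+ 2) / 2 + ip (S t) (z - p t).
have opt t y : C y ->
    ip (S t) (p t - y) <= (`|y - a| ^+ 2 - `|y - p t| ^+ 2 - `|p t - a| ^+ 2) / 2.
  by move=> Cy; have := @proj_three_point 1 a (S t) y ltr01 Cy; rewrite scale1r mulr1 mulrC.
have N_ge0 t : 0 <= N t.
  by have := opt t z Cz; have := sqr_ge0 `|z - p t|; rewrite /N !ipBr; lra.
have decr t : (1 <= t < T.+1)%N -> ip (xs t) (x t - z) <= (N t - N t.+1) / theta t + B t.
  move=> t_in; have th_gt0 := theta_gt0 t t_in.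
  have := step t (p t.+1) t_in (proj_in _); have := opt t (p t.+1) (proj_in _).
  have S_succ : S t.+1 = S t + theta t *: xs t by rewrite /S big_nat_recr //=; case/andP: t_in.
  rewrite /N S_succ !ipDl !ipZl !ipBr -/(p t) => opt_t step_t.
  rewrite -(ler_pM2l th_gt0) [X in _ <= X]mulrDr mulrCA mulfV ?gt_eqF // mulr1.
  have half : theta t * (2 * theta t)^-1 = 2^-1 by field; rewrite gt_eqF.
  have := ler_wpM2l (ltW th_gt0) step_t; rewrite mulrBr mulrA half; nra.
(* Abel summation with the weights [1 / theta t], cut off after [T]. *)
pose v t := if (t <= T)%N then (theta t)^-1 else 0.
have weights t : (1 <= t <= T)%N -> 0 <= N t.+1 /\ v t.+1 <= v t.
  move=> t_in; split=> //; rewrite /v (andP t_in).2.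
  have [t_lt|_] := ltnP t T; last by rewrite invr_ge0 ltW ?theta_gt0.
  have t_ge1 := (andP t_in).1.
  by rewrite lef_pV2 ?posrE ?theta_gt0 ?theta_incr ?t_ge1 ?t_lt ?(ltnW t_lt) ?andbT.
apply: le_trans (ler_sum_nat decr) _.
rewrite big_split lerD2r /=.
rewrite (eq_big_nat _ _ (F2 := fun t => (N t - N t.+1) * v t)); last first.
  by move=> t /andP[_]; rewrite ltnS /v => ->.
apply: le_trans (sum_weighted_decrements_le _ _ _ weights) _.
have N1 : N 1%N = `|z - a| ^+ 2 / 2.
  by rewrite /N /p /S big_geq // subr0 proj_id // subrr normr0 ip0l; lra.
rewrite /v ltnn mulr0 subr0 N1; case: ifP => _.
  by rewrite [leRHS]mulrC invfM mulrA.
by rewrite mulr0 mulr_ge0 ?sqr_ge0 // invr_ge0 mulr_ge0 // ltW.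
Qed.

End Projection.

End InnerProduct.

Theorem corollary6 (R : realType) (E : completeNormedModType R)
  (ip : E -> E -> R) (C : set E) (P : E -> E) (a : E) (T : nat) :
  is_inner_product ip ->
  C !=set0 -> closed C -> convex_set C ->
  is_metric_projection C P ->
  C a ->
  let rho := diameter C in
  (* (i) nonincreasing step sizes eta_1 >= ... >= eta_{T+1} > 0 *)
  (forall (eta : nat -> R) (phi : nat -> E -> \bar R) (xs xh x xt : nat -> E)
          (z : E),
     (forall t, (1 <= t <= T)%N -> eta t.+1 <= eta t) -> 0 < eta T.+1 ->
     (forall t, (1 <= t <= T)%N ->
        [/\ proper_fun (phi t), C `<=` dom_subdiff ip (phi t),
            xt t = P (a - eta t *: \sum_(1 <= i < t) xs i),
            x t = P (xt t - eta t *: xh t)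
          & subgrad ip (phi t) (x t) (xs t)]) ->
     C z ->
     (regret T phi x z <=
        ((2 * eta T.+1)^-1 * `|z - a| ^+ 2
         + \sum_(1 <= t < T.+1) (eta t)^-1 * Qstar rho (eta t * `|xs t - xh t|)
         - \sum_(1 <= t < T.+1) (2 * eta t)^-1 * `|x t - xt t| ^+ 2)%:E)%E
     /\
     (regret T phi x z <=
        ((2 * eta T.+1)^-1 * `|z - a| ^+ 2
         + \sum_(1 <= t < T.+1) (eta t)^-1 * Phi rho (eta t) (xs t) (xh t)
         - \sum_(1 <= t < T.+1) (2 * eta t)^-1
             * `|P (xt t - eta t *: yhat (xs t) (xh t)) - xt t| ^+ 2)%:E)%E)
  /\
  (* (ii) nondecreasing weights 0 < theta_1 <= ... <= theta_T *)
  (forall (theta : nat -> R) (phi : nat -> E -> \bar R) (xs xh x xt : nat -> E)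
          (z : E),
     0 < theta 1%N -> (forall t, (1 <= t < T)%N -> theta t <= theta t.+1) ->
     (forall t, (1 <= t <= T)%N ->
        [/\ proper_fun (phi t), C `<=` dom_subdiff ip (phi t),
            xt t = P (a - \sum_(1 <= i < t) theta i *: xs i),
            x t = P (xt t - theta t *: xh t)
          & subgrad ip (phi t) (x t) (xs t)]) ->
     C z ->
     (regret T phi x z <=
        ((2 * theta 1%N)^-1 * `|z - a| ^+ 2
         + \sum_(1 <= t < T.+1) (theta t)^-1 * Qstar rho (theta t * `|xs t - xh t|)
         - \sum_(1 <= t < T.+1) (2 * theta t)^-1 * `|x t - xt t| ^+ 2)%:E)%E
     /\
     (regret T phi x z <=
        ((2 * theta 1%N)^-1 * `|z - a| ^+ 2
         + \sum_(1 <= t < T.+1) (theta t)^-1 * Phi rho (theta t) (xs t) (xh t)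
         - \sum_(1 <= t < T.+1) (2 * theta t)^-1
             * `|P (xt t - theta t *: yhat (xs t) (xh t)) - xt t| ^+ 2)%:E)%E).
Proof.
move=> ip_inner _ _ C_convex P_proj Ca rho.
split=> [eta phi xs xh x xt z eta_decr etaT_gt0 round Cz
        |theta phi xs xh x xt z theta1_gt0 theta_incr round Cz].
- have eta_gt0 := nonincreasing_nat_gt0 _ _ eta_decr etaT_gt0.
  have le_regret : (regret T phi x z <= (\sum_(1 <= t < T.+1) ip (xs t) (x t - z))%:E)%E.
    by apply: (@regret_le_sum_ip _ _ _ ip_inner C) => // t /round[_ dom _ _ sub].
  split; apply: le_trans le_regret _; rewrite lee_fin -addrA -sumrB;
    apply: (dual_averaging_le ip_inner C_convex P_proj) => // t y t_in Cy;
    have [_ _ xt_def x_def _] := round t t_in; rewrite -xt_def x_def;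
    have eta_t : 0 < eta t by apply: eta_gt0; case/andP: t_in => -> /leqW.
  + by apply: proj_step_le_Qstar.
  + by apply: proj_step_le_Phi.
- have theta_gt0 := nondecreasing_nat_gt0 _ _ theta1_gt0 theta_incr.
  have le_regret : (regret T phi x z <= (\sum_(1 <= t < T.+1) ip (xs t) (x t - z))%:E)%E.
    by apply: (@regret_le_sum_ip _ _ _ ip_inner C) => // t /round[_ dom _ _ sub].
  split; apply: le_trans le_regret _; rewrite lee_fin -addrA -sumrB;
    apply: (weighted_dual_averaging_le ip_inner C_convex P_proj) => // t y t_in Cy;
    have [_ _ xt_def x_def _] := round t t_in; rewrite -xt_def x_def.
  + by apply: proj_step_le_Qstar => //; apply: theta_gt0.
  + by apply: proj_step_le_Phi => //; apply: theta_gt0.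
Qed.
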